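(* Let $(S,+,\cdot)$ be a left semi-brace. Then the semigroup $(S,+)$ is stationary on the right, i.e. for all $a,b,c,x\in S$, $a+b=a+c$ implies $x+b=x+c$. Consequently $(S,+)$ is a rectangular semigroup, and moreover: (1) the set $E(S)$ of idempotents of $(S,+)$ is a rectangular band; (2) an element $e\in S$ belongs to $E(S)$ if and only if $e$ is a middle unit of $(S,+)$, i.e. $a+e+b=a+b$ for all $a,b\in S$.
   Context: A left semi-brace is a triple $(S,+,\cdot)$ such that $(S,+)$ is a semigroup (not necessarily commutative), $(S,\cdot)$ is a group (with inverse $a^{-1}$ and identity $1$), and $a(b+c)=ab+a(a^{-1}+c)$ for all $a,b,c\in S$. A semigroup $(S,+)$ is rectangular if for all $a,b,x,y\in S$, $a+x=b+x=a+y$ implies $a+x=b+y$. A rectangular band is a rectangular semigroup all of whose elements are idempotent. *)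

Definition is_semigroup {S : Type} (add : S -> S -> S) : Prop :=
  forall a b c, add (add a b) c = add a (add b c).

Definition is_group {S : Type} (mul : S -> S -> S) (inv : S -> S) (one : S) : Prop :=
  (forall a b c, mul (mul a b) c = mul a (mul b c)) /\
  (forall a, mul one a = a) /\ (forall a, mul a one = a) /\
  (forall a, mul (inv a) a = one) /\ (forall a, mul a (inv a) = one).

Definition is_left_semi_brace {S : Type} (add mul : S -> S -> S) (inv : S -> S) (one : S) : Prop :=
  is_semigroup add /\ is_group mul inv one /\
  (forall a b c, mul a (add b c) = add (mul a b) (mul a (add (inv a) c))).

Definition right_stationary {S : Type} (add : S -> S -> S) : Prop :=
  forall a b c x, add a b = add a c -> add x b = add x c.

Definition rectangular {S : Type} (add : S -> S -> S) : Prop :=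
  forall a b x y, add a x = add b x -> add b x = add a y -> add a x = add b y.

Definition idempotent {S : Type} (add : S -> S -> S) (e : S) : Prop := add e e = e.

(* E(S) is a rectangular band: a subsemigroup of (S,+), all of whose elements
   are idempotent, which is rectangular as a semigroup. *)
Definition idempotents_rectangular_band {S : Type} (add : S -> S -> S) : Prop :=
  (forall e f, idempotent add e -> idempotent add f -> idempotent add (add e f)) /\
  (forall a b x y, idempotent add a -> idempotent add b -> idempotent add x ->
     idempotent add y ->
     add a x = add b x -> add b x = add a y -> add a x = add b y).

Definition middle_unit {S : Type} (add : S -> S -> S) (e : S) : Prop :=
  forall a b, add (add a e) b = add a b.


Set Implicit Arguments.

(* The semi-brace law with [a = 1] says that [1] is a middle unit of [(S,+)],
   and with [b = 1] it rewrites [1 + b] as [a (a^-1 + a^-1 (a + b))]; hence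
   [x + b = x + (1 + b)] depends on [b] only through [a + b], which is right
   stationarity.  Conversely, if [e] is a middle unit then [w := e + e]
   satisfies [w + e = w]; transporting this fixed point along the left
   multiplication by [e w^-1] gives [e + s = e] for some [s], whence
   [e + e = e + e + s = e + s = e]. *)

Section RightStationarySemigroup.

Variables (S : Type) (add : S -> S -> S).
Local Notation "a + b" := (add a b).

Lemma right_stationary_rectangular : right_stationary add -> rectangular add.
Proof.
  intros Hst a b x y Hab Hba.
  rewrite Hab; apply (Hst a x y b); congruence.
Qed.

Hypothesis addA : is_semigroup add.

Lemma idempotent_middle_unit (e : S) :
  right_stationary add -> idempotent add e -> middle_unit add e.
Proof.
  intros Hst He a b; rewrite addA.
  apply (Hst e); rewrite <- addA, He; reflexivity.
Qed.

Lemma idempotent_add_middle_unit (e f : S) :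
  idempotent add e -> middle_unit add f -> idempotent add (e + f).
Proof.
  intros He Hf; unfold idempotent.
  rewrite <- addA, Hf, He; reflexivity.
Qed.

End RightStationarySemigroup.

Section Group.

Variables (S : Type) (mul : S -> S -> S) (inv : S -> S) (one : S).
Hypothesis Hg : is_group mul inv one.
Local Notation "a * b" := (mul a b).

Lemma invg1 : inv one = one.
Proof.
  destruct Hg as (_ & _ & mulg1 & mulVg & _).
  rewrite <- (mulg1 (inv one)); apply mulVg.
Qed.

Lemma invgK (a : S) : inv (inv a) = a.
Proof.
  destruct Hg as (mulA & mul1g & mulg1 & mulVg & _).
  rewrite <- (mulg1 (inv (inv a))), <- (mulVg a), <- mulA, mulVg; apply mul1g.
Qed.

Lemma mulKVg (a x : S) : a * (inv a * x) = x.
Proof.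
  destruct Hg as (mulA & mul1g & _ & _ & mulgV).
  rewrite <- mulA, mulgV; apply mul1g.
Qed.

Lemma mulgKV (a x : S) : x * inv a * a = x.
Proof.
  destruct Hg as (mulA & _ & mulg1 & mulVg & _).
  rewrite mulA, mulVg; apply mulg1.
Qed.

End Group.

Section LeftSemiBrace.

Variables (S : Type) (add mul : S -> S -> S) (inv : S -> S) (one : S).
Hypothesis Hsb : is_left_semi_brace add mul inv one.
Local Notation "a + b" := (add a b).
Local Notation "a * b" := (mul a b).

Let addA : is_semigroup add := proj1 Hsb.
Let Hg : is_group mul inv one := proj1 (proj2 Hsb).
Let brace : forall a b c, a * (b + c) = a * b + a * (inv a + c) := proj2 (proj2 Hsb).

Lemma one_middle_unit : middle_unit add one.
Proof.
  destruct Hg as (_ & mul1g & _).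
  intros b c; rewrite addA.
  pose proof (brace one b c) as H; rewrite !mul1g, (invg1 Hg) in H.
  congruence.
Qed.

Lemma one_add_translate (a b : S) : one + b = a * (inv a + inv a * (a + b)).
Proof.
  destruct Hg as (_ & _ & mulg1 & _).
  pose proof (brace (inv a) one b) as H; rewrite mulg1, (invgK Hg) in H.
  rewrite <- H; symmetry; apply (mulKVg Hg).
Qed.

Lemma semi_brace_right_stationary : right_stationary add.
Proof.
  intros a b c x Habc.
  rewrite <- (one_middle_unit x b), <- (one_middle_unit x c), !addA.
  rewrite (one_add_translate a b), (one_add_translate a c), Habc.
  reflexivity.
Qed.

Lemma add_fixpoint_translate (g u d : S) :
  u + d = u -> g * u + g * (inv g + d) = g * u.
Proof. intros Hud; rewrite <- brace, Hud; reflexivity. Qed.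

Lemma middle_unit_idempotent (e : S) : middle_unit add e -> idempotent add e.
Proof.
  intros He; unfold idempotent.
  set (w := e + e).
  set (g := e * inv w).
  assert (Hgw : g * w = e) by apply (mulgKV Hg).
  assert (Hwe : w + e = w) by apply He.
  pose proof (add_fixpoint_translate g Hwe) as Hes; rewrite Hgw in Hes.
  transitivity (e + (e + g * (inv g + e))); [rewrite Hes; reflexivity |].
  rewrite <- addA, He; exact Hes.
Qed.

End LeftSemiBrace.

Theorem proposition9 (S : Type) (add mul : S -> S -> S) (inv : S -> S) (one : S) :
  is_left_semi_brace add mul inv one ->
  right_stationary add /\
  rectangular add /\
  idempotents_rectangular_band add /\
  (forall e : S, idempotent add e <-> middle_unit add e).
Proof.
  intros Hsb.
  pose proof (proj1 Hsb) as addA.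
  pose proof (semi_brace_right_stationary Hsb) as Hst.
  pose proof (right_stationary_rectangular Hst) as Hrect.
  assert (Hmid : forall e, idempotent add e <-> middle_unit add e).
  { intros e; split.
    - apply (idempotent_middle_unit addA), Hst.
    - apply (middle_unit_idempotent Hsb). }
  split; [exact Hst |]; split; [exact Hrect |]; split; [split |].
  - intros e f He Hf.
    apply (idempotent_add_middle_unit addA), Hmid; assumption.
  - intros a b x y _ _ _ _; apply Hrect.
  - exact Hmid.
Qed.
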